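(* Let $G_{\|v_0}$ be an initialized mean-payoff game, let $i\in\Pi$, and let $\lambda$ be a requirement with either $\lambda(V)\subseteq\mathbb{R}$ or $\lambda=\lambda_0$. Then $$\inf_{\tau_\mathbb{P}}\ \sup_{\tau_\mathbb{C}}\ \nu_\mathbb{C}\big(\langle\tau_\mathbb{P},\tau_\mathbb{C}\rangle_{s_0}\big)=\inf_{\bar\sigma_{-i}\in\lambda\mathrm{Rat}_i(v_0)}\ \sup_{\sigma_i}\ \mu_i\big(\langle\bar\sigma_{-i},\sigma_i\rangle_{v_0}\big),$$ where the left-hand side is the value $\mathrm{val}_\mathbb{C}(\mathrm{Conc}_{\lambda i}(G)_{\|s_0})$ of the concrete negotiation game.
   Context: A game is a tuple $G=(\Pi,V,(V_i)_{i\in\Pi},E,\mu)$ with $\Pi$ a finite set of players, $(V,E)$ a finite directed graph in which every vertex has an outgoing edge, $(V_i)_i$ a partition of $V$, and $\mu:V^\omega\to\mathbb{R}^\Pi$. Plays, histories, strategies, profiles, compatibility, $\langle\bar\sigma\rangle_v$ and $\bar\sigma_{\|hw}$ ($\sigma_{j\|hw}(h')=\sigma_j(hh')$) are as usual; $-i=\Pi\setminus\{i\}$. A mean-payoff game is a game where $\mu$ is given by a weight function $\pi:E\to\mathbb{Q}^\Pi$ via $\mu_j(\rho)=\liminf_{n\to\infty}\frac1n\sum_{k=0}^{n-1}\pi_j(\rho_k\rho_{k+1})$. A requirement is a map $\lambda:V\to\mathbb{R}\cup\{\pm\infty\}$; $\lambda_0$ is constantly $-\infty$. A play $\rho$ is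 $\lambda$-consistent if for every $j\in\Pi$ and $n$ with $\rho_n\in V_j$, $\mu_j(\rho_n\rho_{n+1}\cdots)\ge\lambda(\rho_n)$. $\lambda\mathrm{Rat}_i(v)$ is the set of profiles $\bar\sigma_{-i}$ in $G_{\|v}$ for which there exists $\sigma_i$ such that for every history $hw$ from $v$ compatible with $\bar\sigma_{-i}$, $\langle\bar\sigma_{\|hw}\rangle_w$ is $\lambda$-consistent; $\inf\emptyset=+\infty$. The concrete negotiation game $\mathrm{Conc}_{\lambda i}(G)_{\|s_0}$ is the two-player zero-sum game between Prover $\mathbb{P}$ and Challenger $\mathbb{C}$ with Prover states $S_\mathbb{P}=V\times2^V$, Challenger states $S_\mathbb{C}=E\times2^V$, initial state $s_0=(v_0,\{v_0\})$, and transitions: proposals $(v,M)\to(vw,M)$ for $vw\in E$; acceptations $(vw,M)\to(w,M\cup\{w\})$; deviations $(uv,M)\to(w,\{w\})$ whenever $u\in V_i$, $uw\in E$, $w\neq v$. The weight function $\hat\pi$ has coordinates indexed by $\Pi\cup\{\star\}$: on proposals all coordinates are $0$; on an acceptation or deviation $(uv,M)\to(w,N)$, $\hat\pi_\star=2\pi_i(uw)$ and, for $j\in\Pi$, $\hat\pi_j=2\big(\pi_j(uw)-\max_{x\in M\cap V_j}\lambda(x)\big)$, with the convention that $\hat\pi_j=0$ when $M\cap V_j=\emptyset$ or this maximum is $-\infty$. For each coordinate $d$, $\hat\mu_d(\eta)=\liminf_n\frac1n\sum_{k<n}\hat\pi_d(\eta_k\eta_{k+1})$. Challenger's outcome is $\nu_\mathbb{C}(\eta)=+\infty$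 if $\eta$ contains only finitely many deviations and $\hat\mu_j(\eta)<0$ for some $j\in\Pi$, and $\nu_\mathbb{C}(\eta)=\hat\mu_\star(\eta)$ otherwise; $\nu_\mathbb{P}=-\nu_\mathbb{C}$. $\langle\tau_\mathbb{P},\tau_\mathbb{C}\rangle_{s_0}$ is the play generated by strategies of Prover and Challenger. The game is determined, so $\mathrm{val}_\mathbb{C}=\inf_{\tau_\mathbb{P}}\sup_{\tau_\mathbb{C}}\nu_\mathbb{C}=\sup_{\tau_\mathbb{C}}\inf_{\tau_\mathbb{P}}\nu_\mathbb{C}$. *)

From HB Require Import structures.
From mathcomp Require Import all_boot all_order all_algebra.
From mathcomp Require Import all_classical all_reals.
From mathcomp Require Import ereal sequences.
Set Implicit Arguments. Unset Strict Implicit. Unset Printing Implicit Defensive.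
Import Order.TTheory GRing.Theory Num.Theory.
Local Open Scope ring_scope.
Local Open Scope ereal_scope.

Definition mean_payoff (R : realType) (w : nat -> R) : \bar R :=
  limn_einf (fun n : nat => (((n%:R)^-1 * \sum_(k < n) w k)%R)%:E).

(* Play generated from an initial state by a "next move" function
   [nxt past current]; [gen_tail nxt x0 n] is the list x_1 .. x_n. *)
Fixpoint gen_tail (T : Type) (nxt : seq T -> T -> T) (x0 : T) (n : nat) : seq T :=
  match n with
  | 0 => [::]
  | n'.+1 => let t := gen_tail nxt x0 n' in
             rcons t (nxt (belast x0 t) (last x0 t))
  end.
Definition gen_play (T : Type) (nxt : seq T -> T -> T) (x0 : T) : nat -> T :=
  fun n => last x0 (gen_tail nxt x0 n).

Section Game.
Variables (R : realType) (V Pi : finType) (owner : V -> Pi) (E : rel V)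
          (pi : V -> V -> Pi -> rat).

(* A strategy maps a history, given as (past vertices, current vertex),
   to the next vertex. *)
Definition strat := seq V -> V -> V.
Definition profile := Pi -> strat.

Definition valid_strat (j : Pi) (s : strat) : Prop :=
  forall p v, owner v = j -> E v (s p v).

(* profile of the players other than i (the i-th component is ignored) *)
Definition valid_profile_mi (i : Pi) (sg : profile) : Prop :=
  forall j, j != i -> valid_strat j (sg j).

Definition combine (i : Pi) (sg : profile) (si : strat) : profile :=
  fun j => if j == i then si else sg j.

Definition outcome (sg : profile) (v : V) : nat -> V :=
  gen_play (fun p x => sg (owner x) p x) v.

(* sg_{|hw}: history hw = rcons h w, sigma_{|hw}(h') = sigma(h h') *)
Definition shift_profile (sg : profile) (h : seq V) : profile :=
  fun j p x => sg j (h ++ p) x.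

Definition mu (j : Pi) (rho : nat -> V) : \bar R :=
  mean_payoff (fun k => ratr (pi (rho k) (rho k.+1) j)).

Definition suffix (rho : nat -> V) (n : nat) : nat -> V := fun k => rho (n + k)%N.

Definition lam_consistent (lam : V -> \bar R) (rho : nat -> V) : Prop :=
  forall (j : Pi) (n : nat), owner (rho n) = j -> lam (rho n) <= mu j (suffix rho n).

(* history (rcons h w) of G starting at v *)
Definition history_from (v : V) (h : seq V) (w : V) : Prop :=
  head w h = v /\
  forall k, (k < size h)%N ->
    E (nth w (rcons h w) k) (nth w (rcons h w) k.+1).

Definition compatible_mi (i : Pi) (sg : profile) (h : seq V) (w : V) : Prop :=
  forall k, (k < size h)%N ->
    let x := nth w (rcons h w) k in
    owner x != i ->
    nth w (rcons h w) k.+1 = sg (owner x) (take k (rcons h w)) x.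

Definition lamRat (lam : V -> \bar R) (i : Pi) (v : V) (sg : profile) : Prop :=
  exists si : strat, valid_strat i si /\
    forall h w, history_from v h w -> compatible_mi i sg h w ->
      lam_consistent lam (outcome (shift_profile (combine i sg si) h) w).

Inductive cstate :=
| PS of V & {set V}
| CS of V & V & {set V}.     (* Challenger state (uv, M) *)

Definition ctrans (i : Pi) (s s' : cstate) : Prop :=
  match s, s' with
  | PS v M, CS u w N => u = v /\ N = M /\ E v w
  | CS u v M, PS w N =>
      (w = v /\ N = M :|: [set v])
      \/ (owner u = i /\ E u w /\ w != v /\ N = [set w])
  | _, _ => False
  end.

Definition is_deviation (s s' : cstate) : Prop :=
  match s, s' with
  | CS u v M, PS w N => w != v
  | _, _ => False
  end.

Definition cstrat := seq cstate -> cstate -> cstate.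

Definition valid_prover (i : Pi) (t : cstrat) : Prop :=
  forall p v M, ctrans i (PS v M) (t p (PS v M)).
Definition valid_challenger (i : Pi) (t : cstrat) : Prop :=
  forall p u v M, ctrans i (CS u v M) (t p (CS u v M)).

Definition cplay (tP tC : cstrat) (s : cstate) : nat -> cstate :=
  gen_play (fun p x => match x with PS _ _ => tP p x | CS _ _ _ => tC p x end) s.

(* weight hat-pi; coordinate None is the extra coordinate star.
   Convention: the max over an empty set is -oo, and the weight is 0 whenever
   that max is not a real number. *)
Definition hatpi (lam : V -> \bar R) (i : Pi) (d : option Pi) (s s' : cstate) : R :=
  match s, s' with
  | CS u v M, PS w N =>
      match d with
      | None => 2 * ratr (pi u w i)
      | Some j =>
          let m := \big[Order.max/-oo]_(x in M | owner x == j) lam x in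
          if m \is a fin_num then 2 * (ratr (pi u w j) - fine m) else 0
      end
  | _, _ => 0
  end%R.

Definition hatmu (lam : V -> \bar R) (i : Pi) (d : option Pi) (eta : nat -> cstate) : \bar R :=
  mean_payoff (fun k => hatpi lam i d (eta k) (eta k.+1)).

Definition nuC (lam : V -> \bar R) (i : Pi) (eta : nat -> cstate) : \bar R :=
  if `[< (exists N, forall k, (N <= k)%N -> ~ is_deviation (eta k) (eta k.+1))
         /\ exists j : Pi, hatmu lam i (Some j) eta < 0 >]
  then +oo
  else hatmu lam i None eta.

End Game.

From Pilot Require Import Defs.
From HB Require Import structures.
From mathcomp Require Import all_boot all_order all_algebra.
From mathcomp Require Import all_classical all_reals.
From mathcomp Require Import ereal sequences.
From mathcomp Require Import ring lra.
Set Implicit Arguments. Unset Strict Implicit. Unset Printing Implicit Defensive.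
Import Order.TTheory GRing.Theory Num.Theory.

(* - A play of the negotiation game alternates Prover proposals and Challenger
     answers; its Prover states carry a play rho of G and a memory set.  Since
     hat-pi vanishes on proposals, each coordinate hat-mu of the negotiation
     play is a mean payoff along rho ("interleaving" lemma), and a
     negative hat-mu_j after the last deviation means that a remembered
     vertex of j has a requirement above mu_j(rho).
   - val_C <= inf: a lambda-rational profile sg with witness si gives the Prover
     strategy proposing what (sg, si) prescribes.  If Challenger deviates only
     finitely often, lambda-rationality after the last deviation makes every
     hat-mu_j nonnegative, so her outcome is mu_i(rho), and rho is an outcome
     of sg against a strategy of player i.
   - inf <= val_C: a Prover strategy tP gives the profile proposing what tP
     would propose on the replayed negotiation.  If that profile is
     lambda-rational (with its own strategy for i as witness), Challenger can
     steer the negotiation along any outcome; otherwise she steers it along a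
     history violating a requirement and then accepts forever, winning +oo. *)

Section Sequences.
Variable T : Type.
Implicit Types (f g : nat -> T) (s : seq T).

Lemma take_mkseq f k n : take k (mkseq f n) = mkseq f (minn k n).
Proof. by rewrite /mkseq -map_take take_iota. Qed.

Lemma take_nth_mkseq (d : T) s n : n <= size s -> take n s = mkseq (nth d s) n.
Proof. by move=> ns; rewrite -{1}(mkseq_nth d s) take_mkseq (minn_idPl ns). Qed.

Lemma mkseq_add f m n : mkseq f (m + n) = mkseq f m ++ mkseq (fun k => f (m + k)) n.
Proof.
rewrite /mkseq iotaD map_cat add0n; congr cat.
by rewrite -{1}(addn0 m) iotaDl -map_comp.
Qed.

Lemma mkseq_behead f n : behead (mkseq f n.+1) = mkseq (fun k => f k.+1) n.
Proof. by rewrite /mkseq /= -[1]/(1 + 0) iotaDl -map_comp. Qed.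

Lemma nth_rcons_mkseq f m k (d : T) : k <= m -> nth d (rcons (mkseq f m) (f m)) k = f k.
Proof. by move=> km; rewrite -mkseqS nth_mkseq. Qed.

Lemma eq_mkseq_lt f g n : (forall k, k < n -> f k = g k) -> mkseq f n = mkseq g n.
Proof.
by move=> fg; apply/eq_in_map => k; rewrite mem_iota => /andP[_]; apply: fg.
Qed.

End Sequences.

Section GeneratedPlay.
Variables (T : Type) (nxt : seq T -> T -> T) (x0 : T).

Lemma gen_tail_map n : gen_tail nxt x0 n = [seq gen_play nxt x0 k | k <- iota 1 n].
Proof.
elim: n => [//|n IH].
have -> : iota 1 n.+1 = rcons (iota 1 n) n.+1.
  by rewrite -cats1 -(addn1 n) iotaD /= add1n addn1.
by rewrite map_rcons /= -IH /gen_play /= last_rcons.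
Qed.

Lemma gen_playS n :
  gen_play nxt x0 n.+1 = nxt (mkseq (gen_play nxt x0) n) (gen_play nxt x0 n).
Proof.
rewrite {1}/gen_play /= last_rcons gen_tail_map; congr nxt.
  rewrite /mkseq [X in belast X _](_ : x0 = gen_play nxt x0 0) //.
  by elim: n 0 => [//|n IHn] m /=; rewrite IHn.
case: n => [//|n]; rewrite /gen_play gen_tail_map /=.
by rewrite (last_map (gen_play nxt x0)) /gen_play gen_tail_map.
Qed.

Lemma gen_play_uniq (f : nat -> T) : f 0 = x0 ->
  (forall n, f n.+1 = nxt (mkseq f n) (f n)) -> forall n, f n = gen_play nxt x0 n.
Proof.
move=> f0 fS n; elim: n {-2}n (leqnn n) => [|n IH] k; first by rewrite leqn0 => /eqP ->.
rewrite leq_eqVlt => /orP[/eqP ->|]; last exact: IH.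
by rewrite fS gen_playS IH //; congr nxt; apply: eq_mkseq_lt => j jn; rewrite IH // ltnW.
Qed.

End GeneratedPlay.

Local Open Scope ring_scope.
Local Open Scope classical_set_scope.
Local Open Scope ereal_scope.

Section MeanPayoff.
Variable R : realType.
Implicit Types (a b u v : nat -> R) (B D c e : R).

Lemma limn_einfE_sup (U : nat -> \bar R) :
  limn_einf U = ereal_sup (range (einfs U)).
Proof. by rewrite limn_einf_lim; apply/cvg_lim => //; apply: cvg_einfs_sup. Qed.

Lemma limn_einf_le_approx u v :
  (forall e, (0 < e)%R -> forall M, exists N, forall n, (N <= n)%N ->
     exists m, (M <= m)%N /\ (u m <= v n + e)%R) ->
  limn_einf (fun n => (u n)%:E) <= limn_einf (fun n => (v n)%:E).
Proof.
move=> uv; rewrite [X in X <= _]limn_einfE_sup.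
apply: ge_ereal_sup => _ [M _ <-]; apply/lee_addgt0Pr => e e0.
have [N HN] := uv e e0 M.
have tailN : einfs (fun n => (u n)%:E) M - e%:E <= einfs (fun n => (v n)%:E) N.
  apply: le_ereal_inf_tmp => _ [n /= Nn <-].
  have [m [Mm um]] := HN n Nn.
  rewrite EFinN leeBlDr //; apply: (@le_trans _ _ (u m)%:E).
    by apply: ereal_inf_lbound; exists m.
  by rewrite -EFinD lee_fin.
have tail_le : einfs (fun n => (v n)%:E) N <= limn_einf (fun n => (v n)%:E).
  by rewrite limn_einfE_sup; apply: ereal_sup_ubound; exists N.
by rewrite -leeBlDr //; apply: le_trans tail_le.
Qed.

Lemma limn_einf_eq_eventually u v N : (forall n, (N <= n)%N -> u n = v n) ->
  limn_einf (fun n => (u n)%:E) = limn_einf (fun n => (v n)%:E).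
Proof.
move=> uv; apply/eqP; rewrite eq_le; apply/andP; split;
  apply: limn_einf_le_approx => e e0 M; exists (maxn N M) => n;
  rewrite geq_max => /andP[Nn Mn]; exists n; split => //;
  by rewrite uv // lerDl ltW.
Qed.

Definition avg a n : R := ((n%:R)^-1 * \sum_(k < n) a k)%R.

Lemma mean_payoffE a : mean_payoff a = limn_einf (fun n => (avg a n)%:E).
Proof. by []. Qed.

Lemma eventually_div_le D e : (0 < e)%R ->
  exists N, forall n, (N <= n)%N -> (D / n%:R <= e)%R.
Proof.
move=> e0; exists (Num.truncn (`|D| / e)).+1 => n Nn.
have n0 : (0 < n%:R :> R)%R by rewrite ltr0n (leq_trans _ Nn).
rewrite ler_pdivrMr //; apply: (le_trans (ler_norm D)).
have := truncnS_gt (`|D| / e); rewrite ltr_pdivrMr // => lt_D.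
apply/ltW/(lt_le_trans lt_D).
by rewrite mulrC ler_wpM2l ?(ltW e0) // ler_nat.
Qed.

Lemma mean_payoff_le_sums a b D :
  (forall n, (\sum_(k < n) a k <= \sum_(k < n) b k + D)%R) ->
  mean_payoff a <= mean_payoff b.
Proof.
move=> ab; rewrite !mean_payoffE; apply: limn_einf_le_approx => e e0 M.
have [N HN] := @eventually_div_le D e e0.
exists (maxn N (maxn M 1)) => n; rewrite !geq_max => /and3P[Nn Mn n1].
exists n; split => //.
apply: (@le_trans _ _ (avg b n + D / n%:R)%R); last by rewrite lerD2l HN.
have n0 : (0 < n%:R :> R)%R by rewrite ltr0n.
rewrite /avg ler_pdivrMl // mulrDr mulrA mulfV ?gt_eqF // mul1r.
by rewrite mulrC -mulrA mulVf ?gt_eqF // mulr1 ab.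
Qed.

Lemma mean_payoff_eq_sums a b D :
  (forall n, (`|\sum_(k < n) a k - \sum_(k < n) b k| <= D)%R) ->
  mean_payoff a = mean_payoff b.
Proof.
move=> ab; apply/eqP; rewrite eq_le; apply/andP; split;
  apply: (@mean_payoff_le_sums _ _ D) => n; rewrite -lerBlDl;
  apply: le_trans (ler_norm _) _; by rewrite // distrC.
Qed.

Lemma sum_nat_norm_le a B m p : (forall k, `|a k| <= B)%R ->
  (`|\sum_(m <= k < p) a k| <= (p - m)%:R * B)%R.
Proof.
move=> aB; apply: (le_trans (ler_norm_sum _ _ _)).
apply: (@le_trans _ _ (\sum_(m <= k < p) B)%R); first exact: ler_sum.
by rewrite sumr_const_nat mulr_natl.
Qed.

Lemma mean_payoff_le_eventually a b K : (forall k, (K <= k)%N -> (a k <= b k)%R) ->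
  mean_payoff a <= mean_payoff b.
Proof.
move=> ab; apply: (@mean_payoff_le_sums _ _ (\sum_(0 <= k < K) `|a k - b k|)%R) => n.
rewrite -lerBlDl -sumrB -(big_mkord xpredT (fun k => a k - b k)%R).
suff prefix : (\sum_(0 <= k < n) (a k - b k) <= \sum_(0 <= k < minn n K) `|a k - b k|)%R.
  apply: (le_trans prefix).
  rewrite [X in (_ <= X)%R](big_cat_nat (n:=minn n K)) //= ?geq_minr //.
  by rewrite lerDl sumr_ge0.
elim: n => [|n IH]; first by rewrite min0n !big_geq.
rewrite big_nat_recr //=; case: (ltnP n K) => nK.
  rewrite (minn_idPl nK) (minn_idPl (ltnW nK)) in IH *; rewrite big_nat_recr //=.
  by apply: lerD => //; apply: ler_norm.
rewrite (minn_idPr nK) (minn_idPr (leqW nK)) in IH *.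
by rewrite -[X in (_ <= X)%R]addr0 lerD // subr_le0 ab.
Qed.

Lemma mean_payoff_eq_eventually a b K : (forall k, (K <= k)%N -> a k = b k) ->
  mean_payoff a = mean_payoff b.
Proof.
move=> ab; apply/eqP; rewrite eq_le; apply/andP; split;
  apply: (@mean_payoff_le_eventually _ _ K) => k Kk; by rewrite ab.
Qed.

Lemma mean_payoff_cst c : mean_payoff (fun _ => c) = c%:E.
Proof.
rewrite mean_payoffE (@limn_einf_eq_eventually _ (fun _ => c) 1).
  by have [-> _] := cvg_limn_einf_sup (cvg_cst (c%:E)).
move=> n n1; rewrite /avg sumr_const card_ord -[(c *+ n)%R]mulr_natl mulrA mulVf ?mul1r //.
by rewrite pnatr_eq0 -lt0n.
Qed.

Lemma mean_payoff_subr a c :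
  mean_payoff (fun k => a k - c)%R = mean_payoff a - c%:E.
Proof.
rewrite !mean_payoffE (@limn_einf_eq_eventually _ (fun n => - c + avg a n)%R 1).
  under eq_fun do rewrite EFinD.
  by rewrite (limn_einf_shift (fun n => (avg a n)%:E)) // addeC EFinN.
move=> n n1; rewrite /avg sumrB sumr_const card_ord mulrBr -[(c *+ n)%R]mulr_natl.
rewrite mulrA mulVf ?mul1r 1?addrC //.
by rewrite pnatr_eq0 -lt0n.
Qed.

Lemma mean_payoff_fin_num a B : (forall k, `|a k| <= B)%R ->
  mean_payoff a \is a fin_num.
Proof.
move=> aB; rewrite fin_numElt; apply/andP; split.
  apply: (@lt_le_trans _ _ (- B)%:E); first by rewrite ltNyr.
  rewrite -mean_payoff_cst; apply: (@mean_payoff_le_eventually _ _ 0) => k _.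
  by rewrite lerNl (le_trans _ (aB k)) // -normrN ler_norm.
apply: (@le_lt_trans _ _ B%:E); last by rewrite ltry.
rewrite -mean_payoff_cst; apply: (@mean_payoff_le_eventually _ _ 0) => k _.
by rewrite (le_trans _ (aB k)) // ler_norm.
Qed.

Lemma mean_payoff_shift a B N : (forall k, `|a k| <= B)%R ->
  mean_payoff (fun k => a (N + k)%N) = mean_payoff a.
Proof.
move=> aB; apply: (@mean_payoff_eq_sums _ _ (N%:R * B + N%:R * B)%R) => n.
have shifted : (\sum_(k < n) a (N + k)%N = \sum_(N <= k < N + n) a k)%R.
  elim: n => [|n IH]; first by rewrite big_ord0 addn0 big_geq.
  by rewrite big_ord_recr /= IH addnS big_nat_recr //= leq_addr.
have split_sums : (\sum_(N <= k < N + n) a k + \sum_(0 <= k < N) a k =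
                   \sum_(k < n) a k + \sum_(n <= k < N + n) a k)%R.
  rewrite addrC -big_cat_nat ?leq_addr // -(big_mkord xpredT a).
  by rewrite -big_cat_nat ?leq_addl.
have -> : (\sum_(k < n) a (N + k)%N - \sum_(k < n) a k =
           \sum_(n <= k < N + n) a k - \sum_(0 <= k < N) a k)%R.
  by rewrite shifted -(addrK (\sum_(0 <= k < N) a k)%R
    (\sum_(N <= k < N + n) a k)%R) split_sums; ring.
apply: (le_trans (ler_normB _ _)); apply: lerD;
  by apply: (le_trans (sum_nat_norm_le _ _ aB)); rewrite ?addnK ?subn0.
Qed.

Lemma sum_interleave a b : (forall k, b k = if odd k then 2 * a k./2 else 0)%R ->
  forall n, (\sum_(k < n) b k = 2 * \sum_(k < n./2) a k)%R.
Proof.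
move=> ab; elim => [|n IH]; first by rewrite !big_ord0 mulr0.
rewrite big_ord_recr /= IH ab uphalf_half.
case: (odd n) => /=; last by rewrite addr0.
by rewrite big_ord_recr /= mulrDr.
Qed.

(* This interleaving preserves the mean payoff of a bounded sequence: this is
   how a play of the negotiation game, which alternates Prover and Challenger
   moves, relates to the play of G it describes. *)
Lemma mean_payoff_interleave a b B : (forall k, `|a k| <= B)%R ->
  (forall k, b k = if odd k then 2 * a k./2 else 0)%R ->
  mean_payoff b = mean_payoff a.
Proof.
move=> aB ab; have sum_b := sum_interleave ab.
have B0 : (0 <= B)%R by apply: le_trans (aB 0%N).
apply/eqP; rewrite eq_le !mean_payoffE; apply/andP; split;
  apply: limn_einf_le_approx => e e0 M.
  (* The average of [b] over [2n] terms is the average of [a] over [n] terms. *)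
  exists M => n Mn; exists n.*2; split; first by rewrite -addnn (leq_trans Mn) ?leq_addr.
  rewrite /avg sum_b doubleK -muln2 natrM invfM -mulrA (mulrA 2^-1%R).
  by rewrite mulVf ?mul1r ?pnatr_eq0 // lerDl ltW.
(* The average of [a] over [n/2] terms exceeds the average of [b] over [n]
   terms by at most [B / n]. *)
have [N HN] := @eventually_div_le B e e0.
exists (maxn N M.*2) => n; rewrite geq_max => /andP[Nn Mn].
exists n./2; split; first by rewrite -(doubleK M) half_leq.
apply: (le_trans _ (lerD (lexx _) (HN n Nn))).
rewrite /avg sum_b; set k := n./2; set S := (\sum_(j < k) a j)%R.
have [k0|k0] := eqVneq k 0%N; first by rewrite /S k0 big_ord0 !mulr0 add0r divr_ge0.
have n0 : (0 < n%:R :> R)%R.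
  by rewrite ltr0n lt0n; apply: contra_neq k0 => n0; rewrite /k n0.
have k0' : (0 < k%:R :> R)%R by rewrite ltr0n lt0n.
have S_le : ((odd n)%:R * S <= k%:R * B)%R.
  case: (odd n); last by rewrite mul0r mulr_ge0.
  rewrite mul1r; apply: le_trans (ler_norm _) _.
  rewrite /S -(big_mkord xpredT a); apply: le_trans (sum_nat_norm_le _ _ aB) _.
  by rewrite subn0.
have n_eq : (n%:R = 2 * k%:R + (odd n)%:R :> R)%R.
  by rewrite -{1}(odd_double_half n) natrD -muln2 natrM mulrC addrC.
rewrite (mulrC B) -mulrDr ler_pdivrMl // mulrCA ler_pdivlMl //.
by rewrite n_eq; nra.
Qed.

End MeanPayoff.

Section Negotiation.
Variables (R : realType) (V Pi : finType) (owner : V -> Pi) (E : rel V)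
  (pi : V -> V -> Pi -> rat) (i : Pi) (lam : V -> \bar R) (v0 : V).
Implicit Types (M : {set V}) (j : Pi).

Definition state_vertex (s : cstate V) : V :=
  match s with PS v _ => v | CS u _ _ => u end.
Definition state_target (s : cstate V) : V :=
  match s with PS v _ => v | CS _ v _ => v end.
Definition state_memory (s : cstate V) : {set V} :=
  match s with PS _ M => M | CS _ _ M => M end.
Definition is_prover_state (s : cstate V) : bool :=
  match s with PS _ _ => true | CS _ _ _ => false end.

Definition weight_bound (j : Pi) : R :=
  (\sum_(x : V) \sum_(y : V) `|ratr (pi x y j) : R|)%R.

Lemma weight_bound_ge j x y : (`|ratr (pi x y j) : R| <= weight_bound j)%R.
Proof.
rewrite /weight_bound (bigD1 x) //= (bigD1 y) //= -addrA lerDl.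
by rewrite addr_ge0 // sumr_ge0 // => z _; rewrite sumr_ge0.
Qed.

Lemma mu_fin_num j (r : nat -> V) : mu R pi j r \is a fin_num.
Proof. by apply: (@mean_payoff_fin_num _ _ (weight_bound j)) => k; apply: weight_bound_ge. Qed.

Lemma mu_suffix j (r : nat -> V) n : mu R pi j (Defs.suffix r n) = mu R pi j r.
Proof.
rewrite /mu -(@mean_payoff_shift _ (fun k => ratr (pi (r k) (r k.+1) j))
  (weight_bound j) n); last by move=> k; apply: weight_bound_ge.
by congr mean_payoff; apply/funext => k; rewrite /Defs.suffix addnS.
Qed.

(* The largest requirement of the vertices of [j] in a memory set [M]: the
   quantity subtracted in the weight hat-pi_j. *)
Definition max_requirement (M : {set V}) (j : Pi) : \bar R :=
  \big[Order.max/-oo]_(x in M | owner x == j) lam x.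

Lemma max_requirement_Ny M j : (forall v, lam v = -oo) -> max_requirement M j = -oo.
Proof.
move=> lamNy; apply: (big_ind (fun y => y = -oo)) => // a b -> ->.
by rewrite maxxx.
Qed.

Lemma max_requirement_fin M j x : (forall v, lam v \is a fin_num) ->
  x \in M -> owner x = j ->
  lam x <= max_requirement M j /\ max_requirement M j \is a fin_num.
Proof.
move=> lam_fin xM xj; have lam_le : lam x <= max_requirement M j.
  by apply: le_bigmax_cond; rewrite xM xj eqxx.
split => //; have : max_requirement M j = -oo \/ max_requirement M j \is a fin_num.
  apply: (big_ind (fun y => y = -oo \/ y \is a fin_num)); [by left| |by right].
  by move=> a b ha hb; rewrite /Order.max; case: ifP.
case=> // mNy; move: lam_le; rewrite mNy leeNy_eq => /eqP lNy.
by move: (lam_fin x); rewrite lNy.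
Qed.

Lemma max_requirement_le M j (c : \bar R) :
  (forall x, x \in M -> owner x = j -> lam x <= c) -> max_requirement M j <= c.
Proof.
move=> Mc; apply: bigmax_le; first exact: leNye.
by move=> x /andP[xM /eqP xj]; apply: Mc.
Qed.

Lemma max_requirement_empty M j : (forall x, x \in M -> owner x != j) ->
  max_requirement M j = -oo.
Proof.
by move=> Mj; rewrite /max_requirement big_pred0 // => x; apply/negP => /andP[/Mj/negP].
Qed.

Definition challenger_value (tP : cstrat V) : \bar R :=
  ereal_sup [set y | exists tC, valid_challenger owner E i tC /\
    y = nuC owner pi lam i (cplay tP tC (PS v0 [set v0]%SET))].

Definition player_value (sg : profile V Pi) : \bar R :=
  ereal_sup [set y | exists si : strat V, valid_strat owner E i si /\
    y = mu R pi i (outcome owner (combine i sg si) v0)].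

Lemma hatmu_star_le_nuC (eta : nat -> cstate V) :
  hatmu owner pi lam i None eta <= nuC owner pi lam i eta.
Proof. by rewrite /nuC; case: asboolP => _; [exact: leey | exact: lexx]. Qed.

(* Even positions are Prover states (rho n, memory n),
   odd positions are Challenger states proposing the edge
   (rho n, proposal n); [rho] is the play of G that the negotiation builds. *)
Section NegotiationPlay.
Variables (tP tC : cstrat V) (hP : valid_prover owner E i tP)
  (hC : valid_challenger owner E i tC).

Definition eta := cplay tP tC (PS v0 [set v0]%SET).
Definition rho n := state_vertex (eta n.*2).
Definition memory n := state_memory (eta n.*2).
Definition proposal n := state_target (eta n.*2.+1).

Lemma eta_trans n : ctrans owner E i (eta n) (eta n.+1).
Proof.
rewrite /eta /cplay gen_playS -/(cplay tP tC _ n) -/eta.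
by case: (eta n) => [v M|u v M]; [apply: hP | apply: hC].
Qed.

Lemma eta_even n : eta n.*2 = PS (rho n) (memory n).
Proof.
suff [v [M e]] : exists v M, eta n.*2 = PS v M by rewrite /rho /memory e.
elim: n => [|n [v [M e]]]; first by exists v0, [set v0]%SET.
have := eta_trans n.*2; rewrite e; case e1 : (eta n.*2.+1) => [//|u w N] _.
have := eta_trans n.*2.+1; rewrite e1 doubleS.
by case: (eta n.*2.+2) => [w' N'|] //; exists w', N'.
Qed.

Lemma eta_odd n : eta n.*2.+1 = CS (rho n) (proposal n) (memory n) /\
  E (rho n) (proposal n).
Proof.
have := eta_trans n.*2; rewrite eta_even /proposal.
by case: (eta n.*2.+1) => //= u w N [-> [-> Ew]].
Qed.

Lemma eta_odd_prover n : eta n.*2.+1 = tP (mkseq eta n.*2) (eta n.*2).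
Proof. by rewrite /eta /cplay gen_playS -/(cplay tP tC _ _) -/eta eta_even. Qed.

Lemma eta_even_challenger n : eta n.+1.*2 = tC (mkseq eta n.*2.+1) (eta n.*2.+1).
Proof.
by rewrite doubleS /eta /cplay gen_playS -/(cplay tP tC _ _) -/eta (eta_odd n).1.
Qed.

Lemma eta_step n :
  (rho n.+1 = proposal n /\ memory n.+1 = memory n :|: [set proposal n]%SET) \/
  (owner (rho n) = i /\ E (rho n) (rho n.+1) /\ rho n.+1 != proposal n /\
   memory n.+1 = [set rho n.+1]%SET).
Proof.
have := eta_trans n.*2.+1; rewrite (eta_odd n).1 -doubleS eta_even /=.
by case => [[-> ->]|[own [Ew [ne ->]]]]; [left|right].
Qed.

Lemma memory_accept n : rho n.+1 = proposal n ->
  memory n.+1 = (memory n :|: [set rho n.+1])%SET.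
Proof.
move=> acc; case: (eta_step n) => [[_ ->]|[_ [_ [ne _]]]]; first by rewrite acc.
by rewrite acc eqxx in ne.
Qed.

Lemma memory_deviate n : rho n.+1 != proposal n ->
  memory n.+1 = [set rho n.+1]%SET.
Proof. by case: (eta_step n) => [[-> _]|[_ [_ [_ ->]]]] //; rewrite eqxx. Qed.

Lemma rho_edge n : E (rho n) (rho n.+1).
Proof. by case: (eta_step n) => [[-> _]|[_ [Ew _]]] //; apply: (eta_odd n).2. Qed.

Lemma rho_memory n : rho n \in memory n.
Proof.
case: n => [|n]; first exact: set11.
case: (eta_step n) => [[-> ->]|[_ [_ [_ ->]]]]; last by rewrite set11.
by rewrite finset.in_setU set11 orbT.
Qed.

Lemma memory_grows N n d : (forall k, (N <= k)%N -> rho k.+1 = proposal k) ->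
  (N <= n)%N -> (memory n \subset memory (n + d))%SET.
Proof.
move=> acc Nn; elim: d => [|d IH]; first by rewrite addn0 subxx.
rewrite addnS memory_accept; last by rewrite acc // (leq_trans Nn) ?leq_addr.
exact: fintype.subset_trans IH (finset.subsetUl _ _).
Qed.

(* Half of the weight of the Challenger move leaving position 2n+1, on the
   coordinate [d] ([None] stands for the coordinate star). *)
Definition step_weight (d : option Pi) n : R :=
  match d with
  | None => ratr (pi (rho n) (rho n.+1) i)
  | Some j => let m := max_requirement (memory n) j in
      if m \is a fin_num then (ratr (pi (rho n) (rho n.+1) j) - fine m)%R else 0%R
  end.

Lemma eta_weights d k : hatpi owner pi lam i d (eta k) (eta k.+1) =
  if odd k then (2 * step_weight d k./2)%R else 0%R.
Proof.
move: (odd_double_half k); set m := k./2; case: (odd k) => /= <-.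
  rewrite add1n (eta_odd m).1 -doubleS eta_even /=.
  by case: d => [j|] //=; case: ifP => _; rewrite ?mulr0.
by rewrite add0n eta_even.
Qed.

Lemma hatmu_star : hatmu owner pi lam i None eta = mu R pi i rho.
Proof.
apply: (@mean_payoff_interleave _ (fun n => ratr (pi (rho n) (rho n.+1) i)) _
  (weight_bound i)); first by move=> k; apply: weight_bound_ge.
by move=> k; rewrite eta_weights.
Qed.

Lemma mean_payoff_interleave_subr j (c : R) :
  mean_payoff (fun k => if odd k then
    2 * (ratr (pi (rho k./2) (rho k./2.+1) j) - c) else 0)%R = mu R pi j rho - c%:E.
Proof.
rewrite /mu -mean_payoff_subr.
apply: (@mean_payoff_interleave _ _ _ (weight_bound j + `|c|)%R) => //.
by move=> k; apply: le_trans (ler_normB _ _) _; rewrite lerD2r weight_bound_ge.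
Qed.

Lemma hatmu_le j K (c : R) : (forall n, (K <= n)%N ->
    (step_weight (Some j) n <= ratr (pi (rho n) (rho n.+1) j) - c)%R) ->
  hatmu owner pi lam i (Some j) eta <= mu R pi j rho - c%:E.
Proof.
move=> le_c; rewrite -mean_payoff_interleave_subr.
apply: (@mean_payoff_le_eventually _ _ _ K.*2) => k Kk.
rewrite eta_weights; case: (odd k) => //.
by rewrite ler_pM2l // le_c // -(doubleK K) half_leq.
Qed.

Lemma hatmu_ge j K (c : R) : (forall n, (K <= n)%N ->
    (ratr (pi (rho n) (rho n.+1) j) - c <= step_weight (Some j) n)%R) ->
  mu R pi j rho - c%:E <= hatmu owner pi lam i (Some j) eta.
Proof.
move=> ge_c; rewrite -mean_payoff_interleave_subr.
apply: (@mean_payoff_le_eventually _ _ _ K.*2) => k Kk.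
rewrite eta_weights; case: (odd k) => //.
by rewrite ler_pM2l // ge_c // -(doubleK K) half_leq.
Qed.

Lemma hatmu_zero j K : (forall n, (K <= n)%N -> step_weight (Some j) n = 0%R) ->
  hatmu owner pi lam i (Some j) eta = 0.
Proof.
move=> w0; rewrite /hatmu (_ : 0 = (0%R)%:E) // -(mean_payoff_cst 0%R).
apply: (@mean_payoff_eq_eventually _ _ _ K.*2) => k Kk.
rewrite eta_weights; case: (odd k) => //.
by rewrite w0 ?mulr0 // -(doubleK K) half_leq.
Qed.

Lemma no_deviation_even n : ~ is_deviation (eta n.*2) (eta n.*2.+1).
Proof. by rewrite eta_even. Qed.

Lemma deviation_odd n :
  is_deviation (eta n.*2.+1) (eta n.+1.*2) <-> rho n.+1 != proposal n.
Proof. by rewrite (eta_odd n).1 eta_even. Qed.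

Lemma finitely_many_deviations :
  (exists N, forall k, (N <= k)%N -> ~ is_deviation (eta k) (eta k.+1)) <->
  (exists N, forall n, (N <= n)%N -> rho n.+1 = proposal n).
Proof.
split=> [[N nodev]|[N acc]].
  exists N => n Nn; apply/eqP/negPn/negP => dev.
  apply: (nodev n.*2.+1); first by rewrite -addnn (leq_trans Nn) // leqW // leq_addr.
  by rewrite -doubleS; apply/deviation_odd.
exists N.*2 => k Nk; rewrite -(odd_double_half k); case: (odd k) => /=.
  rewrite add1n -doubleS deviation_odd acc ?eqxx //.
  by rewrite -(doubleK N) half_leq // (leq_trans Nk) // -{1}(odd_double_half k) leq_addl.
by rewrite add0n; apply: no_deviation_even.
Qed.

(* If deviations stop, some position [m] after which all proposals are
   accepted starts with a memory reduced to its vertex (the position of the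
   last deviation, or the initial one). *)
Lemma last_memory_reset N : (forall n, (N <= n)%N -> rho n.+1 = proposal n) ->
  exists m, (forall n, (m <= n)%N -> rho n.+1 = proposal n) /\
            memory m = [set rho m]%SET.
Proof.
elim: N => [|N IH] acc; first by exists 0%N.
have [accN|dev] := eqVneq (rho N.+1) (proposal N); last first.
  by exists N.+1; split => //; apply: memory_deviate.
by apply: IH => n; rewrite leq_eqVlt => /orP[/eqP <- //|]; apply: acc.
Qed.

Lemma memory_since_reset m n x :
  (forall k, (m <= k)%N -> rho k.+1 = proposal k) -> memory m = [set rho m]%SET ->
  (m <= n)%N -> x \in memory n -> exists2 k, (m <= k <= n)%N & x = rho k.
Proof.
move=> acc reset mn; rewrite -(subnKC mn); elim: (n - m)%N x => [|d IH] x.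
  by rewrite addn0 reset => /set1P ->; exists m => //; rewrite leqnn.
rewrite addnS memory_accept; last by rewrite acc // leq_addr.
case/setUP => [/IH [k /andP[mk kd] ->]|/set1P ->].
  by exists k => //; rewrite mk (leq_trans kd).
by exists (m + d).+1 => //; rewrite leqnn andbT -addnS leq_addr.
Qed.

Lemma rho_history m : history_from E v0 (mkseq rho m) (rho m).
Proof.
split; first by case: m.
move=> k; rewrite size_mkseq => km.
by rewrite !nth_rcons_mkseq ?(ltnW km) //; apply: rho_edge.
Qed.

Lemma mkseq_eta_double n :
  mkseq eta n.+1.*2 = mkseq eta n.*2 ++ [:: eta n.*2; eta n.*2.+1].
Proof. by rewrite doubleS !mkseqS -!cats1 -catA. Qed.

Lemma prover_vertices_eta n :
  [seq state_vertex s | s <- mkseq eta n.*2 & is_prover_state s] = mkseq rho n.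
Proof.
elim: n => [//|n IH].
rewrite mkseq_eta_double filter_cat map_cat IH mkseqS -cats1; congr cat.
by rewrite /= eta_even (eta_odd n).1.
Qed.

Lemma hatmu_ge0 j N :
  (forall v, lam v \is a fin_num) \/ (forall v, lam v = -oo) ->
  (forall n, (N <= n)%N -> rho n.+1 = proposal n) ->
  (forall n x, (N <= n)%N -> x \in memory n -> owner x = j -> lam x <= mu R pi j rho) ->
  0 <= hatmu owner pi lam i (Some j) eta.
Proof.
move=> [lam_fin|lamNy] acc bound; last first.
  by rewrite (@hatmu_zero j 0) // => n _; rewrite /step_weight max_requirement_Ny.
have [[n1 [x [Nn1 [xM xj]]]]|none] :=
  pselect (exists n1 x, (N <= n1)%N /\ x \in memory n1 /\ owner x = j); last first.
  rewrite (@hatmu_zero j N) // => n Nn; rewrite /step_weight max_requirement_empty //.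
  by move=> x xM; apply/eqP => xj; apply: none; exists n, x.
have := @hatmu_ge j n1 (fine (mu R pi j rho)).
rewrite fineK ?mu_fin_num // subee ?mu_fin_num //; apply => n n1n.
have xMn : x \in memory n.
  by rewrite -(subnKC n1n); apply: (fintype.subsetP (memory_grows (n - n1) acc Nn1)).
have [_ mfin] := max_requirement_fin lam_fin xMn xj.
rewrite /step_weight mfin lerD2l lerN2 fine_le ?mu_fin_num //.
apply: max_requirement_le => y yM yj; apply: bound yM yj.
by rewrite (leq_trans Nn1).
Qed.

Lemma hatmu_lt0 j x N : (forall v, lam v \is a fin_num) ->
  (forall n, (N <= n)%N -> x \in memory n) -> owner x = j -> mu R pi j rho < lam x ->
  hatmu owner pi lam i (Some j) eta < 0.
Proof.
move=> lam_fin xM xj mu_lt; have := @hatmu_le j N (fine (lam x)).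
rewrite fineK // => hatmu_le_x; apply: le_lt_trans (hatmu_le_x _) _.
  move=> n Nn; have [lam_le mfin] := max_requirement_fin lam_fin (xM n Nn) xj.
  by rewrite /step_weight mfin lerD2l lerN2 (fine_le _ mfin lam_le).
by rewrite lteBlDr // add0e.
Qed.

End NegotiationPlay.

Definition prover_follow (sg : profile V Pi) : cstrat V := fun p s =>
  match s with
  | PS v M => CS v (sg (owner v) [seq state_vertex x | x <- p & is_prover_state x] v) M
  | CS _ _ _ => s
  end.

Lemma prover_follow_valid sg : (forall j, valid_strat owner E j (sg j)) ->
  valid_prover owner E i (prover_follow sg).
Proof. by move=> sg_valid p v M /=; split=> //; split=> //; apply: sg_valid. Qed.

Lemma proposal_follow sg (sg_valid : forall j, valid_strat owner E j (sg j))
  tC (hC : valid_challenger owner E i tC) n :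
  proposal (prover_follow sg) tC n =
  sg (owner (rho (prover_follow sg) tC n)) (mkseq (rho (prover_follow sg) tC) n)
     (rho (prover_follow sg) tC n).
Proof.
have hP := prover_follow_valid sg_valid.
rewrite /proposal (eta_odd_prover hP hC n) (eta_even hP hC n) /=.
by rewrite (prover_vertices_eta hP hC n).
Qed.

Section RationalProfile.
Hypotheses (hE : forall v, exists w, E v w)
  (hlam : (forall v, lam v \is a fin_num) \/ (forall v, lam v = -oo)).
Variables (sg : profile V Pi) (si : strat V).
Hypotheses (sg_valid : valid_profile_mi owner E i sg) (si_valid : valid_strat owner E i si)
  (rational : forall h w, history_from E v0 h w -> compatible_mi owner i sg h w ->
     lam_consistent owner pi lam (outcome owner (shift_profile (combine i sg si) h) w)).

Lemma combine_valid j : valid_strat owner E j (combine i sg si j).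
Proof. by rewrite /combine; case: eqP => [->|/eqP ji] //; apply: sg_valid. Qed.

Let tP := prover_follow (combine i sg si).
Let hP : valid_prover owner E i tP := prover_follow_valid combine_valid.

Section AgainstChallenger.
Variables (tC : cstrat V) (hC : valid_challenger owner E i tC).
Local Notation rho := (rho tP tC).
Local Notation proposal := (proposal tP tC).

(* Challenger cannot deviate at vertices of the other players, so there [rho]
   follows sg. *)
Lemma rho_step_others n : owner (rho n) != i ->
  rho n.+1 = sg (owner (rho n)) (mkseq rho n) (rho n).
Proof.
case: (eta_step hP hC n) => [[-> _]|[own _]]; last by rewrite own eqxx.
by rewrite (proposal_follow combine_valid hC) /combine => /negbTE ->.
Qed.

(* A strategy of player i replaying the moves of [rho]. *)
Definition replay_strat : strat V := fun p x =>
  if rcons p x == mkseq rho (size p).+1 then rho (size p).+1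
  else odflt x [pick y | E x y].

Lemma replay_strat_valid : valid_strat owner E i replay_strat.
Proof.
move=> p x _; rewrite /replay_strat; case: eqP => [e|_].
  have -> : x = rho (size p).
    by move: e; rewrite mkseqS => /eqP; rewrite eqseq_rcons => /andP[_ /eqP].
  exact: (rho_edge hP hC).
case: pickP => [y //|none]; have [y Ey] := hE x.
by have := none y; rewrite Ey.
Qed.

Lemma outcome_replay : outcome owner (combine i sg replay_strat) v0 = rho.
Proof.
apply/funext => n; symmetry; apply: gen_play_uniq => {n} // n.
rewrite /combine; case: eqP => [_|/eqP own]; last exact: rho_step_others.
by rewrite /replay_strat size_mkseq -mkseqS eqxx.
Qed.

(* From a position [m] on which all proposals are accepted, [rho] follows
   the full profile; lambda-rationality, applied to the history rho_0 .. rho_m,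
   then bounds the requirements of the vertices visited from [m] on. *)
Lemma requirement_after m : (forall n, (m <= n)%N -> rho n.+1 = proposal n) ->
  forall k j, (m <= k)%N -> owner (rho k) = j -> lam (rho k) <= mu R pi j rho.
Proof.
move=> acc.
have compatible : compatible_mi owner i sg (mkseq rho m) (rho m).
  move=> k; rewrite size_mkseq => km /=.
  rewrite !nth_rcons_mkseq ?(ltnW km) // => own.
  by rewrite -mkseqS take_mkseq (minn_idPl (leqW (ltnW km))) rho_step_others.
have tail : outcome owner (shift_profile (combine i sg si) (mkseq rho m)) (rho m) =
            Defs.suffix rho m.
  apply/funext => n; symmetry; apply: gen_play_uniq => {n}.
    by rewrite /Defs.suffix addn0.
  move=> n; rewrite /Defs.suffix addnS acc ?leq_addr //.
  by rewrite (proposal_follow combine_valid hC) /shift_profile -mkseq_add.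
have := rational (rho_history hP hC m) compatible; rewrite tail => consistent k j mk own.
have := consistent j (k - m)%N; rewrite /Defs.suffix subnKC // => /(_ own).
rewrite (_ : (fun l => rho (m + (k - m + l))%N) = Defs.suffix rho k) ?mu_suffix //.
by apply/funext => l; rewrite /Defs.suffix addnA subnKC.
Qed.

(* Hence Challenger never wins by the first clause of nuC: her outcome is
   player i's mean payoff along [rho]. *)
Lemma nuC_follow_le : nuC owner pi lam i (eta tP tC) <= mu R pi i rho.
Proof.
rewrite /nuC; case: asboolP => [[finite_dev [j neg_j]]|_]; last first.
  by rewrite (hatmu_star hP hC).
have [N acc] := (finitely_many_deviations hP hC).1 finite_dev.
have [m [accm reset]] := last_memory_reset hP hC acc.
have bound n x : (m <= n)%N -> x \in memory tP tC n -> owner x = j ->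
    lam x <= mu R pi j rho.
  move=> mn xM; have [k /andP[mk _] ->] := memory_since_reset hP hC accm reset mn xM.
  exact: requirement_after accm _ _ mk.
by have := hatmu_ge0 hP hC hlam accm bound; rewrite leNgt neg_j.
Qed.

End AgainstChallenger.

(* Every Challenger answer is matched by the replaying strategy of player i. *)
Lemma challenger_value_follow_le :
  challenger_value (prover_follow (combine i sg si)) <= player_value sg.
Proof.
apply: ge_ereal_sup => _ [tC [hC ->]]; apply: (le_trans (nuC_follow_le hC)).
apply: ereal_sup_ubound; exists (replay_strat tC); split; first exact: replay_strat_valid.
by rewrite outcome_replay.
Qed.

End RationalProfile.

Section ProfileOfProver.
Variables (tP : cstrat V) (hP : valid_prover owner E i tP).

Definition next_state (c : cstate V) (w : V) : cstate V :=
  match c with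
  | CS _ v M => if w == v then PS v (M :|: [set v])%SET else PS w [set w]%SET
  | PS _ _ => PS w [set w]%SET
  end.

(* The negotiation history (past states, current Prover state) in which Prover
   plays tP and Challenger moves along the history [x0 :: hs] of G. *)
Definition replay_step (acc : seq (cstate V) * cstate V) (w : V) :=
  (acc.1 ++ [:: acc.2; tP acc.1 acc.2], next_state (tP acc.1 acc.2) w).
Definition replay_history (x0 : V) (hs : seq V) :=
  foldl replay_step ([::], PS x0 [set x0]%SET) hs.

Definition profile_of_prover : profile V Pi := fun j p x =>
  let r := replay_history (head x p) (behead (rcons p x)) in state_target (tP r.1 r.2).

(* The replay ends in a Prover state at the current vertex, where tP proposes
   an edge: the profile is valid. *)
Lemma replay_history_last x0 hs :
  exists M, (replay_history x0 hs).2 = PS (last x0 hs) M.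
Proof.
elim/last_ind: hs => [|hs w IH]; first by exists [set x0]%SET.
rewrite /replay_history foldl_rcons /= last_rcons.
case: (tP _ _) => [v M|u v M] /=; first by eexists.
by case: eqP => [->|_]; eexists.
Qed.

Lemma head_behead_last (p : seq V) x : last (head x p) (behead (rcons p x)) = x.
Proof. by case: p => [|y p] //=; rewrite last_rcons. Qed.

Lemma profile_of_prover_valid j : valid_strat owner E j (profile_of_prover j).
Proof.
move=> p x _; rewrite /profile_of_prover.
have [M e] := replay_history_last (head x p) (behead (rcons p x)).
rewrite e head_behead_last.
have := hP (replay_history (head x p) (behead (rcons p x))).1 x M.
by case: (tP _ _) => //= u w N [_ [_ Ew]].
Qed.

(* Against any Challenger, the replay of [rho] is the actual negotiation, so
   the profile proposes exactly what tP proposes. *)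
Lemma replay_history_eta tC (hC : valid_challenger owner E i tC) n :
  replay_history v0 (mkseq (fun k => rho tP tC k.+1) n) =
  (mkseq (eta tP tC) n.*2, eta tP tC n.*2).
Proof.
elim: n => [//|n IH].
rewrite mkseqS /replay_history foldl_rcons -/(replay_history _ _) IH /replay_step /=.
rewrite -(eta_odd_prover hP hC n) mkseq_eta_double; congr pair.
rewrite (eta_odd hP hC n).1 (eta_even hP hC n.+1) /=.
case: (eta_step hP hC n) => [[-> ->]|[_ [_ [dev ->]]]]; first by rewrite eqxx.
by rewrite (negbTE dev).
Qed.

Lemma profile_of_prover_eta tC (hC : valid_challenger owner E i tC) j n :
  profile_of_prover j (mkseq (rho tP tC) n) (rho tP tC n) = proposal tP tC n.
Proof.
rewrite /profile_of_prover -mkseqS mkseq_behead.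
have -> : head (rho tP tC n) (mkseq (rho tP tC) n) = v0 by case: n.
by rewrite (replay_history_eta hC) /= -(eta_odd_prover hP hC n).
Qed.

Definition challenger_toward (target : nat -> V) : cstrat V := fun p s =>
  match s with
  | CS u v M => let w := target (size p)./2.+1 in
      if w == v then PS v (M :|: [set v])%SET
      else if (owner u == i) && E u w then PS w [set w]%SET
      else PS v (M :|: [set v])%SET
  | PS _ _ => s
  end.

Lemma challenger_toward_valid target : valid_challenger owner E i (challenger_toward target).
Proof.
move=> p u v M /=; case: ifP => [_|ne]; first by left.
case: ifP => [/andP[/eqP own Euw]|_]; last by left.
by right; rewrite ne.
Qed.

Lemma rho_toward target : target 0%N = v0 ->
  (forall n, (forall k, (k <= n)%N -> rho tP (challenger_toward target) k = target k) ->
     target n.+1 = proposal tP (challenger_toward target) n \/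
     (owner (target n) = i /\ E (target n) (target n.+1))) ->
  forall n, rho tP (challenger_toward target) n = target n.
Proof.
move=> t0 tS; have hC := challenger_toward_valid target.
move=> n; elim: n {-2}n (leqnn n) => [|n IH] k; first by rewrite leqn0 => /eqP ->.
rewrite leq_eqVlt => /orP[/eqP ->|]; last exact: IH.
rewrite /rho (eta_even_challenger hP hC n) (eta_odd hP hC n).1 /=.
rewrite size_map size_iota uphalf_half odd_double doubleK add0n.
case: (tS n IH) => [->|[own Et]]; first by rewrite eqxx.
by case: eqP => [-> //|_]; rewrite -/(rho _ _ n) IH // own eqxx Et.
Qed.

(* If player i plays [si] against the profile, Challenger can steer the
   negotiation along the outcome, and the star coordinate is player i's payoff. *)
Lemma player_payoff_le_challenger_value si : valid_strat owner E i si ->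
  mu R pi i (outcome owner (combine i profile_of_prover si) v0) <= challenger_value tP.
Proof.
move=> si_valid; set tau := outcome owner (combine i profile_of_prover si) v0.
have hC := challenger_toward_valid tau.
have follows n : rho tP (challenger_toward tau) n = tau n.
  apply: rho_toward => // {}n prefix.
  have tauS : tau n.+1 =
      combine i profile_of_prover si (owner (tau n)) (mkseq tau n) (tau n).
    by rewrite /tau /outcome gen_playS.
  have [own|own] := eqVneq (owner (tau n)) i.
    by right; split => //; rewrite tauS /combine own eqxx; apply: si_valid.
  left; rewrite tauS /combine (negbTE own) -(prefix n (leqnn n)).
  rewrite -(eq_mkseq_lt (f := rho tP (challenger_toward tau))); last first.
    by move=> k kn; apply: prefix; rewrite ltnW.
  exact: (profile_of_prover_eta hC).
apply: (@le_trans _ _ (nuC owner pi lam i (eta tP (challenger_toward tau)))).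
  rewrite -(congr1 (mu R pi i) (funext follows)) -(hatmu_star hP hC).
  exact: hatmu_star_le_nuC.
by apply: ereal_sup_ubound; exists (challenger_toward tau).
Qed.

(* A history compatible with the profile after which the profile is not
   lambda-consistent lets Challenger win outright: she follows the history,
   then accepts every proposal, and the violated requirement stays in memory. *)
Section InconsistentHistory.
Variables (h : seq V) (w : V).
Hypotheses (h_hist : history_from E v0 h w)
  (h_compat : compatible_mi owner i profile_of_prover h w).

Let K := size h.
Let tau := outcome owner (shift_profile profile_of_prover h) w.

Definition history_then_outcome n : V :=
  if (n <= K)%N then nth w (rcons h w) n else tau (n - K)%N.
Let target := history_then_outcome.
Let tC := challenger_toward target.
Let hC : valid_challenger owner E i tC := challenger_toward_valid target.

Lemma target_before n : (n <= K)%N -> target n = nth w (rcons h w) n.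
Proof. by move=> nK; rewrite /target /history_then_outcome nK. Qed.

Lemma target_after n : (K <= n)%N -> target n = tau (n - K)%N.
Proof.
move=> Kn; rewrite /target /history_then_outcome; case: leqP => // nK.
have -> : n = K by apply/eqP; rewrite eqn_leq nK Kn.
by rewrite subnn nth_rcons ltnn eqxx.
Qed.

Lemma mkseq_target n : (K <= n)%N -> h ++ mkseq tau (n - K) = mkseq target n.
Proof.
move=> Kn; rewrite -{2}(subnKC Kn) mkseq_add; congr cat.
  rewrite -{1}(mkseq_nth w h); apply: eq_mkseq_lt => k kK.
  by rewrite target_before ?(ltnW kK) // nth_rcons kK.
by apply: eq_mkseq_lt => k _; rewrite target_after ?leq_addr // addKn.
Qed.

Lemma target_step n : (K <= n)%N ->
  target n.+1 = profile_of_prover (owner (target n)) (mkseq target n) (target n).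
Proof.
move=> Kn; rewrite target_after ?(leqW Kn) // (subSn Kn) target_after //.
by rewrite /tau /outcome gen_playS -/(outcome _ _ _) /shift_profile -/tau mkseq_target.
Qed.

(* The negotiation follows this play: along the history by compatibility or
   deviations of player i, and then by accepting the profile's proposals. *)
Lemma rho_target n : rho tP tC n = target n.
Proof.
apply: rho_toward; first by rewrite target_before //; case: h_hist; case: (h).
move=> {}n prefix.
have pre : mkseq (rho tP tC) n = mkseq target n.
  by apply: eq_mkseq_lt => k kn; apply: prefix; rewrite ltnW.
have [nK|Kn] := ltnP n K; last first.
  by left; rewrite target_step // -pre -(prefix n (leqnn n)) (profile_of_prover_eta hC).
rewrite !target_before ?(ltnW nK) //.
have [own|own] := eqVneq (owner (nth w (rcons h w) n)) i.
  by right; split => //; apply: h_hist.2.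
left; rewrite (h_compat nK own).
rewrite (take_nth_mkseq w); last by rewrite size_rcons (leq_trans (ltnW nK)).
have -> : mkseq (nth w (rcons h w)) n = mkseq target n.
  by apply: eq_mkseq_lt => k kn; rewrite target_before // ltnW // (ltn_trans kn).
by rewrite -target_before ?(ltnW nK) // -pre -(prefix n (leqnn n)) (profile_of_prover_eta hC).
Qed.

Lemma accept_after_history n : (K <= n)%N -> rho tP tC n.+1 = proposal tP tC n.
Proof.
move=> Kn; rewrite !rho_target target_step // -!rho_target.
have -> : mkseq target n = mkseq (rho tP tC) n.
  by apply: eq_mkseq_lt => k _; rewrite rho_target.
exact: (profile_of_prover_eta hC).
Qed.

Lemma tau_rho k : tau k = rho tP tC (K + k).
Proof. by rewrite rho_target target_after ?leq_addr // addKn. Qed.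

(* Deviations stop after the history, and the vertex violating its
   requirement stays in memory: some hat-mu_j is negative. *)
Lemma nuC_inconsistent :
  (forall v, lam v \is a fin_num) \/ (forall v, lam v = -oo) ->
  ~ lam_consistent owner pi lam tau -> nuC owner pi lam i (eta tP tC) = +oo.
Proof.
move=> hlam /existsNP [j /existsNP [n0 /not_implyP [own violated]]].
rewrite /nuC asboolT //; split.
  by apply/(finitely_many_deviations hP hC).2; exists K; apply: accept_after_history.
exists j; case: hlam => [lam_fin|lamNy]; last first.
  by exfalso; apply: violated; rewrite lamNy leNye.
apply: (hatmu_lt0 hP hC lam_fin (N := K + n0)) own _.
  move=> n Kn; rewrite tau_rho -(subnKC Kn).
  apply: (fintype.subsetP (memory_grows hP hC _ accept_after_history (leq_addr n0 K))).
  exact: rho_memory.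
rewrite ltNge; apply/negP => le_lam; apply: violated.
rewrite (_ : Defs.suffix tau n0 = Defs.suffix (rho tP tC) (K + n0)) ?mu_suffix //.
by apply/funext => k; rewrite /Defs.suffix tau_rho addnA.
Qed.

End InconsistentHistory.

(* Either the profile is lambda-rational, with witness its own strategy for
   player i, or Challenger wins against tP. *)
Lemma inf_player_value_le_challenger_value :
  (forall v, lam v \is a fin_num) \/ (forall v, lam v = -oo) ->
  ereal_inf [set x | exists sg : profile V Pi, valid_profile_mi owner E i sg /\
    lamRat owner E pi lam i v0 sg /\ x = player_value sg] <= challenger_value tP.
Proof.
move=> hlam; have combine_self : combine i profile_of_prover (profile_of_prover i) =
    profile_of_prover by apply/funext => j; rewrite /combine; case: eqP => // ->.
have [consistent|inconsistent] := pselect (forall h w, history_from E v0 h w ->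
    compatible_mi owner i profile_of_prover h w ->
    lam_consistent owner pi lam (outcome owner (shift_profile profile_of_prover h) w)).
  apply: (@le_trans _ _ (player_value profile_of_prover)).
    apply: ereal_inf_lbound; exists profile_of_prover; split.
      by move=> j _; apply: profile_of_prover_valid.
    split => //; exists (profile_of_prover i); split; first exact: profile_of_prover_valid.
    by rewrite combine_self.
  by apply: ge_ereal_sup => _ [si [si_valid ->]]; apply: player_payoff_le_challenger_value.
have [h [w [h_hist [h_compat not_consistent]]]] : exists h w, history_from E v0 h w /\
    compatible_mi owner i profile_of_prover h w /\
    ~ lam_consistent owner pi lam (outcome owner (shift_profile profile_of_prover h) w).
  apply: contrapT => none; apply: inconsistent => h w h_hist h_compat.
  by apply: contrapT => not_consistent; apply: none; exists h, w.
apply: (le_trans (leey _)); rewrite -(nuC_inconsistent h_hist h_compat hlam not_consistent).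
apply: ereal_sup_ubound; exists (challenger_toward (history_then_outcome h w)).
by split => //; apply: challenger_toward_valid.
Qed.

End ProfileOfProver.

End Negotiation.

Unset Implicit Arguments.

Theorem theorem3 (R : realType) (V Pi : finType) (owner : V -> Pi) (E : rel V)
  (hE : forall v, exists w, E v w) (pi : V -> V -> Pi -> rat)
  (i : Pi) (lam : V -> \bar R) (v0 : V)
  (hlam : (forall v, lam v \is a fin_num) \/ (forall v, lam v = -oo)) :
  ereal_inf [set x | exists tP, valid_prover owner E i tP /\
     x = ereal_sup [set y | exists tC, valid_challenger owner E i tC /\
            y = nuC owner pi lam i (cplay tP tC (PS v0 [set v0]))]]
  = ereal_inf [set x | exists sg : profile V Pi,
       valid_profile_mi owner E i sg /\ lamRat owner E pi lam i v0 sg /\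
     x = ereal_sup [set y | exists si : strat V, valid_strat owner E i si /\
            y = mu R pi i (outcome owner (combine i sg si) v0)]].
Proof.
apply/eqP; rewrite eq_le; apply/andP; split.
  apply: le_ereal_inf_tmp => _ [sg [sg_valid [[si [si_valid rational]] ->]]].
  apply: le_trans (challenger_value_follow_le hE hlam sg_valid si_valid rational).
  apply: ereal_inf_lbound; exists (prover_follow owner (combine i sg si)); split => //.
  exact: prover_follow_valid (combine_valid sg_valid si_valid).
apply: le_ereal_inf_tmp => _ [tP [hP ->]].
exact: inf_player_value_le_challenger_value hP hlam.
Qed.
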